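(* Let $N\ge2$ and $1>\mu_1>\mu_2>\dots>\mu_N>0$. Consider the partial monitoring game with $M=2^N$ outcomes and $A=2$ symbols where $L=H\in\mathbb{R}^{N\times2^N}$ with $l_{i,j}=h_{i,j}=\mathbb{1}[(j-1\bmod 2^i)<2^{i-1}]+1$, and opponent strategy $p^*\in\mathcal{P}_{2^N}$ with $p^*_j=\prod_{i\in[N]}(\mu_i+(1-2\mu_i)\mathbb{1}[(j-1\bmod2^i)<2^{i-1}])$ (the $N$-armed Bernoulli bandit with means $\mu_i$ represented as partial monitoring). Then: (1) the set $\mathcal{R}^*_1(p^*,\{S_ip^*,0\})$ is a singleton; (2) with $\mathcal{S}_\delta=\{q\in\mathcal{P}_M:D(S_1p^*\Vert S_1q)\le\delta\}$, $\mathrm{cl}(\mathrm{int}(\mathcal{C}_1^c)\cap\mathcal{S}_\delta)=\mathrm{cl}(\mathrm{cl}(\mathcal{C}_1^c)\cap\mathcal{S}_\delta)$ for all $\delta\ge0$ in a neighborhood of $0$; and (3) $C_1(p^*,\{S_ip^*\})=\sum_{i\ne1}\Delta_i/d(\mu_i\Vert\mu_1)$, where $\Delta_i=(L_i-L_1)^\top p^*$ and $d(p\Vert q)=p\log(p/q)+(1-p)\log((1-p)/(1-q))$.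
   Context: $\mathcal{P}_M$ is the set of probability distributions on $[M]$; $L_i$ is the $i$-th row of $L$. Signal matrices $S_i\in\{0,1\}^{A\times M}$ with $(S_i)_{k,j}=1$ iff $h_{i,j}=k$ (so $(S_ip^* )_1=\mu_i$). Cells $\mathcal{C}_j=\{q\in\mathcal{P}_M:\forall i\ne j,(L_j-L_i)^\top q\le0\}$, $\mathcal{C}_j^c=\mathcal{P}_M\setminus\mathcal{C}_j$; $\mathrm{cl},\mathrm{int}$ denote closure and interior in $\mathcal{P}_M$. $D$ is the KL divergence of discrete distributions ($0\log(0/0)=0$), $(x)_+=\max(x,0)$. For distributions $p_i$ on $[A]$ and $\delta_i\ge0$: $\mathcal{R}_j(\{p_i,\delta_i\})=\{\{r_i\}_{i\ne j}\in[0,\infty)^{N-1}:\inf_{q\in\mathrm{cl}(\mathcal{C}_j^c):D(p_j\Vert S_jq)\le\delta_j}\sum_{i\ne j}r_i(D(p_i\Vert S_iq)-\delta_i)_+\ge1\}$, $C_j(p,\{p_i,\delta_i\})=\inf_{\{r_i\}\in\mathcal{R}_j(\{p_i,\delta_i\})}\sum_{i\ne j}r_i(L_i-L_j)^\top p$, $C_j(p,\{p_i\})=C_j(p,\{p_i,0\})$, and $\mathcal{R}^*_j(p,\{p_i,\delta_i\})$ is the set of minimizers. *)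

From HB Require Import structures.
From mathcomp Require Import all_boot all_order all_algebra.
From mathcomp Require Import all_classical all_reals all_analysis.
Set Implicit Arguments. Unset Strict Implicit. Unset Printing Implicit Defensive.
Import Order.TTheory GRing.Theory Num.Theory.
Local Open Scope classical_set_scope.
Local Open Scope ring_scope.

Section PM.
Variable R : realType.

Definition simplex (M : nat) : set ('I_M -> R) :=
  [set q | (forall j, 0 <= q j) /\ \sum_(j < M) q j = 1].

(* closure and interior relative to the subspace P (topology induced by R^M,
   written with the sup-distance) *)
Definition relcl (M : nat) (P X : set ('I_M -> R)) : set ('I_M -> R) :=
  [set q | P q /\ forall e : R, 0 < e ->
     exists x, X x /\ forall k, `|x k - q k| < e].

Definition relint (M : nat) (P X : set ('I_M -> R)) : set ('I_M -> R) :=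
  [set q | P q /\ exists e : R, 0 < e /\
     forall q', P q' -> (forall k, `|q' k - q k| < e) -> X q'].

Definition klterm (a b : R) : \bar R :=
  if a == 0 then 0%E else if b == 0 then +oo%E else (a * ln (a / b))%:E.

Definition KL (A : nat) (p q : 'I_A -> R) : \bar R :=
  (\sum_(k < A) klterm (p k) (q k))%E.

Definition Sig (N M A : nat) (h : 'I_N -> 'I_M -> 'I_A) (i : 'I_N)
  (q : 'I_M -> R) : 'I_A -> R :=
  fun k => \sum_(j < M | h i j == k) q j.

Definition cell (N M : nat) (L : 'I_N -> 'I_M -> R) (j : 'I_N) : set ('I_M -> R) :=
  [set q | simplex q /\
     forall i, i != j -> \sum_(k < M) (L j k - L i k) * q k <= 0].

Definition cellc (N M : nat) (L : 'I_N -> 'I_M -> R) (j : 'I_N) : set ('I_M -> R) :=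
  [set q | simplex q /\ ~ cell L j q].

(* R_j({p_i, delta_i}); a family {r_i}_{i != j} is encoded as r : 'I_N -> R
   with r j = 0 *)
Definition Rset (N M A : nat) (L : 'I_N -> 'I_M -> R) (h : 'I_N -> 'I_M -> 'I_A)
  (j : 'I_N) (ps : 'I_N -> 'I_A -> R) (ds : 'I_N -> R) : set ('I_N -> R) :=
  [set r | r j = 0 /\ (forall i, i != j -> 0 <= r i) /\
     (1 <= ereal_inf
        [set (\sum_(i < N | i != j)
                 (r i)%:E * maxe (KL (ps i) (Sig h i q) - (ds i)%:E) 0)%E
         | q in [set q | relcl (@simplex M) (cellc L j) q /\
                          (KL (ps j) (Sig h j q) <= (ds j)%:E)%E]])%E].

Definition Cj (N M A : nat) (L : 'I_N -> 'I_M -> R) (h : 'I_N -> 'I_M -> 'I_A)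
  (j : 'I_N) (p : 'I_M -> R) (ps : 'I_N -> 'I_A -> R) (ds : 'I_N -> R) : \bar R :=
  ereal_inf [set (\sum_(i < N | i != j) r i * \sum_(k < M) (L i k - L j k) * p k)%:E
            | r in Rset L h j ps ds].

Definition Rstar (N M A : nat) (L : 'I_N -> 'I_M -> R) (h : 'I_N -> 'I_M -> 'I_A)
  (j : 'I_N) (p : 'I_M -> R) (ps : 'I_N -> 'I_A -> R) (ds : 'I_N -> R)
  : set ('I_N -> R) :=
  [set r | Rset L h j ps ds r /\
     (\sum_(i < N | i != j) r i * \sum_(k < M) (L i k - L j k) * p k)%:E
       = Cj L h j p ps ds].

Definition dber (p q : R) : R :=
  p * ln (p / q) + (1 - p) * ln ((1 - p) / (1 - q)).

(* Bernoulli bandit as partial monitoring; 0-based indices: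
   action i : 'I_N is action i+1, outcome j : 'I_(2^N) is outcome j+1, so
   1[((j+1)-1 mod 2^(i+1)) < 2^i] = bit i j. *)
Definition bit (N : nat) (i : 'I_N) (j : 'I_(2 ^ N)) : bool :=
  (j %% 2 ^ i.+1 < 2 ^ i)%N.

Definition Lband (N : nat) : 'I_N -> 'I_(2 ^ N) -> R :=
  fun i j => (bit i j)%:R + 1.

(* H = L, with symbols {1,2} encoded as 'I_2 (symbol 1 = ord0, symbol 2 = ord_max) *)
Definition Hband (N : nat) : 'I_N -> 'I_(2 ^ N) -> 'I_2 :=
  fun i j => if bit i j then ord_max else ord0.

Definition pstar (N : nat) (mu : 'I_N -> R) : 'I_(2 ^ N) -> R :=
  fun j => \prod_(i < N) (mu i + (1 - 2 * mu i) * (bit i j)%:R).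

End PM.

From HB Require Import structures.
From mathcomp Require Import all_boot all_order all_algebra.
From mathcomp Require Import all_classical all_reals all_analysis.
From mathcomp Require Import ring lra.
Import Order.TTheory GRing.Theory Num.Theory.
Local Open Scope classical_set_scope.
Local Open Scope ring_scope.
Set Implicit Arguments. Unset Strict Implicit.

(* Write [mean i q] for the probability that action [i] observes its first
   symbol under [q]. Then [mean i p* = mu_i], the loss gaps are
   [(L_i - L_j)^T q = mean j q - mean i q], and C_1^c is the set of [q] with
   [mean 1 q < mean i q] for some [i != 1]; its closure is given by the
   non-strict inequalities. Moving a point of the closure slightly towards a
   product distribution whose other means are 1 enters the interior without
   changing [mean 1 q], and S_delta only depends on [mean 1 q]: this gives (2).
   In the optimisation problem defining R_1 the constraint forces
   [mean 1 q = mu_1], so some [i != 1] has [mean i q >= mu_1 > mu_i] and pays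
   at least [d(mu_i || mu_1)]; the product distribution in which [mu_i] is
   raised to [mu_1] pays exactly that. Hence R_1 is
   [{r | r_i d(mu_i || mu_1) >= 1}], whose linear objective has the unique
   minimiser [r_i = 1 / d(mu_i || mu_1)]: this gives (1) and (3). *)

Lemma bit_oddE (j i : nat) : (j %% 2 ^ i.+1 < 2 ^ i)%N = ~~ odd (j %/ 2 ^ i).
Proof.
have := modn_divl j 2 (2 ^ i); rewrite modn2 -expnS => e.
by rewrite ltnNge -divn_gt0 ?expn_gt0 // -e; case: (odd _).
Qed.

Lemma bits_inj (n j j' : nat) : (j < 2 ^ n)%N -> (j' < 2 ^ n)%N ->
  (forall i, (i < n)%N -> odd (j %/ 2 ^ i) = odd (j' %/ 2 ^ i)) -> j = j'.
Proof.
elim: n j j' => [|n IH] j j'; first by rewrite expn0 !ltnS !leqn0 => /eqP -> /eqP ->.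
move=> hj hj' hb.
have half : j./2 = j'./2.
  apply: IH; try by rewrite -divn2 ltn_divLR // -expnSr.
  by move=> i hi; rewrite -!divn2 -!divnMA -expnS; exact: hb.
have odd0 : odd j = odd j' by have := hb 0%N isT; rewrite expn0 !divn1.
by rewrite -[j]odd_double_half -[j']odd_double_half odd0 half.
Qed.

Lemma sum_prod_bits (R : comPzSemiRingType) (N : nat) (g : 'I_N -> bool -> R) :
  \sum_(j < 2 ^ N) \prod_(i < N) g i (bit i j) =
  \prod_(i < N) (g i true + g i false).
Proof.
under [RHS]eq_bigr do rewrite -big_bool.
rewrite bigA_distr_bigA /=.
pose bits (j : 'I_(2 ^ N)) := [ffun i : 'I_N => bit i j].
have bits_bij : bijective bits.
  apply: inj_card_bij; last by rewrite card_ffun card_bool !card_ord.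
  move=> j j' /ffunP e; apply/val_inj/(@bits_inj N); rewrite ?ltn_ord // => i hi.
  by apply/negb_inj; have := e (Ordinal hi); rewrite !ffunE /bit !bit_oddE.
rewrite (reindex bits) /=; last exact: onW_bij.
by apply: eq_bigr => j _; apply: eq_bigr => i _; rewrite ffunE.
Qed.

Section Simplex.
Variables (R : realType) (M : nat).
Implicit Types (q r : 'I_M -> R) (P X Y : set ('I_M -> R)).

Lemma simplex_le1 q k : simplex q -> 0 <= q k <= 1.
Proof.
case=> q0 <-; rewrite q0 (bigD1 k) //= lerDl.
by apply: sumr_ge0.
Qed.

Lemma simplex_mix q r t : simplex q -> simplex r -> 0 <= t <= 1 ->
  simplex (fun k => (1 - t) * q k + t * r k).
Proof.
move=> [q0 q1] [r0 r1] /andP[t0 t1]; split.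
  by move=> k; apply: addr_ge0; apply: mulr_ge0; rewrite ?subr_ge0.
by rewrite big_split /= -!mulr_sumr q1 r1; ring.
Qed.

Lemma relcl_subset P X Y : X `<=` Y -> relcl P X `<=` relcl P Y.
Proof.
move=> XY q [Pq near]; split => // e e0; have [x [Xx close]] := near e e0.
by exists x; split => //; apply: XY.
Qed.

Lemma relcl_idem P X : relcl P (relcl P X) `<=` relcl P X.
Proof.
move=> q [Pq near]; split => // e e0.
have e20 : 0 < e / 2 by lra.
have [y [[_ neary] closey]] := near _ e20.
have [x [Xx closex]] := neary _ e20.
exists x; split => // k.
rewrite (_ : x k - q k = (x k - y k) + (y k - q k)); last by ring.
apply: le_lt_trans (ler_normD _ _) _.
by have := closex k; have := closey k; lra.
Qed.

Lemma relint_sub_relcl P X : relint P X `<=` relcl P X.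
Proof.
move=> q [Pq [e [e0 ball]]]; split => // e' e'0.
by exists q; split => [|k]; [apply: ball => // k|]; rewrite subrr normr0.
Qed.

End Simplex.

Section BernoulliKL.
Variable R : realType.
Implicit Types a t x y : R.

Lemma ln_ge1BV t : 0 < t -> 1 - t^-1 <= ln t.
Proof.
move=> t0; have := expR_ge1Dx (ln t^-1).
by rewrite lnK ?posrE ?invr_gt0 // lnV ?posrE //; lra.
Qed.

Lemma ln_gt1BV t : 0 < t -> t != 1 -> 1 - t^-1 < ln t.
Proof.
move=> t0 t1; have := @expR_gt1Dx R (ln t^-1).
rewrite lnK ?posrE ?invr_gt0 // lnV ?posrE // oppr_eq0 ln_eq0 // => /(_ t1).
lra.
Qed.

Lemma dber_self a : 0 < a < 1 -> dber a a = 0.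
Proof.
by case/andP=> a0 a1; rewrite /dber !divff ?ln1 ?mulr0 ?addr0 //; apply/eqP; lra.
Qed.

Lemma dber_subr_gt a x y : 0 < a < 1 -> 0 < x < 1 -> 0 < y < 1 -> x != y ->
  (x - y) * (y - a) / (y * (1 - y)) < dber a x - dber a y.
Proof.
move=> /andP[a0 a1] /andP[x0 x1] /andP[y0 y1] xy.
have ln_yx : 1 - x / y < ln (y / x).
  rewrite -[x / y]invf_div; apply: ln_gt1BV; first exact: divr_gt0.
  by apply: contra xy => /eqP/divr1_eq ->.
have ln_1y1x : 1 - (1 - x) / (1 - y) <= ln ((1 - y) / (1 - x)).
  by rewrite -invf_div; apply: ln_ge1BV; apply: divr_gt0; lra.
have -> : dber a x - dber a y = a * ln (y / x) + (1 - a) * ln ((1 - y) / (1 - x)).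
  by rewrite /dber !ln_div ?posrE; lra.
have -> : (x - y) * (y - a) / (y * (1 - y)) =
    a * (1 - x / y) + (1 - a) * (1 - (1 - x) / (1 - y)).
  by field; apply/andP; split; apply/eqP; lra.
have : a * (1 - x / y) < a * ln (y / x) by rewrite ltr_pM2l.
have : (1 - a) * (1 - (1 - x) / (1 - y)) <= (1 - a) * ln ((1 - y) / (1 - x)).
  by apply: ler_wpM2l => //; lra.
lra.
Qed.

Lemma dber_gt0 a x : 0 < a < 1 -> 0 < x < 1 -> x != a -> 0 < dber a x.
Proof.
move=> ha hx xa; have := dber_subr_gt ha hx ha xa.
by rewrite dber_self // subrr mulr0 mul0r subr0.
Qed.

Lemma dber_ler a y x : 0 < a -> a <= y -> y <= x -> x < 1 ->
  dber a y <= dber a x.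
Proof.
move=> a0 ay yx x1; have [->//|xy] := eqVneq x y.
have /dber_subr_gt : 0 < a < 1 by apply/andP; split; lra.
move=> /(_ x y); rewrite -subr_ge0 => /(_ _ _ xy) gap; apply/ltW/le_lt_trans/gap.
  by apply: divr_ge0; apply: mulr_ge0; lra.
all: by apply/andP; split; lra.
Qed.

Definition klber a x : \bar R := (klterm a x + klterm (1 - a) (1 - x))%E.

Lemma KL2E (p q : 'I_2 -> R) :
  KL p q = (klterm (p ord0) (q ord0) + klterm (p ord_max) (q ord_max))%E.
Proof.
rewrite /KL (bigD1 ord0) //= (bigD1 ord_max) //= big1 ?adde0 //.
by move=> [[|[|k]] hk] //= /andP[].
Qed.

Lemma klber_fin a x : 0 < a < 1 -> 0 < x < 1 -> klber a x = (dber a x)%:E.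
Proof.
move=> /andP[a0 a1] /andP[x0 x1].
by rewrite /klber /klterm !ifN ?EFinD //; apply/eqP; lra.
Qed.

Lemma klber_self a : 0 < a < 1 -> klber a a = 0.
Proof. by move=> ha; rewrite klber_fin // dber_self. Qed.

Lemma klber1 a : 0 < a < 1 -> klber a 1 = +oo%E.
Proof.
by move=> /andP[a0 a1]; rewrite /klber /klterm subrr eqxx !ifN //; apply/eqP; lra.
Qed.

Lemma klber0 a : 0 < a < 1 -> klber a 0 = +oo%E.
Proof.
by move=> /andP[a0 a1]; rewrite /klber /klterm eqxx subr0 !ifN //; apply/eqP; lra.
Qed.

Lemma klber_le0 a x : 0 < a < 1 -> 0 <= x <= 1 -> (klber a x <= 0)%E -> x = a.
Proof.
move=> ha /andP[x0 x1].
have [->|xn0] := eqVneq x 0; first by rewrite klber0.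
have [->|xn1] := eqVneq x 1; first by rewrite klber1.
have hx : 0 < x < 1 by rewrite !lt_neqAle xn1 x0 x1 eq_sym xn0.
rewrite klber_fin // lee_fin; have [//|xa] := eqVneq x a.
by have := dber_gt0 ha hx xa; lra.
Qed.

Lemma dber_le_klber a y x : 0 < a -> a <= y -> y <= x -> x <= 1 -> y < 1 ->
  ((dber a y)%:E <= klber a x)%E.
Proof.
move=> a0 ay yx x1 y1.
have [->|xn1] := eqVneq x 1; first by rewrite klber1 ?leey //; apply/andP; split; lra.
have x1' : x < 1 by rewrite lt_neqAle xn1 x1.
by rewrite klber_fin ?lee_fin ?dber_ler //; apply/andP; split; lra.
Qed.

End BernoulliKL.

Section BanditSignals.
Variables (R : realType) (N : nat).
Local Notation M := (2 ^ N)%N.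
Local Notation h := (@Hband N).
Implicit Types (q x : 'I_M -> R) (nu : 'I_N -> R).

Definition mean (i : 'I_N) q : R := Sig h i q ord0.

Lemma meanE i q : mean i q = \sum_j (~~ bit i j)%:R * q j.
Proof.
rewrite /mean /Sig big_mkcond; apply: eq_bigr => j _.
by rewrite /Hband; case: (bit i j); rewrite ?mul0r ?mul1r.
Qed.

Lemma Sig_Hband_max i q : Sig h i q ord_max = \sum_j (bit i j)%:R * q j.
Proof.
rewrite /Sig big_mkcond; apply: eq_bigr => j _.
by rewrite /Hband; case: (bit i j); rewrite ?mul0r ?mul1r.
Qed.

Lemma mean_add_Sig_Hband_max i q : mean i q + Sig h i q ord_max = \sum_j q j.
Proof.
rewrite meanE Sig_Hband_max -big_split; apply: eq_bigr => j _.
by case: (bit i j); rewrite /= ?mul0r ?mul1r ?add0r ?addr0.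
Qed.

Lemma Lband_gap a b q :
  \sum_(k < M) (Lband R a k - Lband R b k) * q k = mean b q - mean a q.
Proof.
have -> : \sum_(k < M) (Lband R a k - Lband R b k) * q k =
    Sig h a q ord_max - Sig h b q ord_max.
  by rewrite !Sig_Hband_max -sumrB; apply: eq_bigr => k _; rewrite /Lband; ring.
by have := mean_add_Sig_Hband_max a q; have := mean_add_Sig_Hband_max b q; lra.
Qed.

Lemma Sig_Hband_maxE i q : simplex q -> Sig h i q ord_max = 1 - mean i q.
Proof. by case=> _ <-; rewrite -(mean_add_Sig_Hband_max i q) addrC addKr. Qed.

Lemma mean_le1 i q : simplex q -> 0 <= mean i q <= 1.
Proof.
move=> sq; have := Sig_Hband_maxE i sq; case: sq => q0 _.
have : 0 <= mean i q by apply: sumr_ge0.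
have : 0 <= Sig h i q ord_max by apply: sumr_ge0.
lra.
Qed.

Lemma KL_Hband i q x : simplex q -> simplex x ->
  KL (Sig h i q) (Sig h i x) = klber (mean i q) (mean i x).
Proof. by move=> sq sx; rewrite KL2E !Sig_Hband_maxE. Qed.

Lemma mean_mix i t q x :
  mean i (fun k => (1 - t) * q k + t * x k) = (1 - t) * mean i q + t * mean i x.
Proof.
by rewrite !meanE !mulr_sumr -big_split; apply: eq_bigr => k _ /=; ring.
Qed.

Lemma mean_lipschitz i q x e : (forall k, `|x k - q k| < e) ->
  `|mean i x - mean i q| <= M%:R * e.
Proof.
move=> close; rewrite !meanE -sumrB.
apply: le_trans (ler_norm_sum _ _ _) _.
rewrite (_ : M%:R * e = \sum_(k < M) e); last by rewrite sumr_const card_ord mulr_natl.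
apply: ler_sum => k _.
rewrite -mulrBr normrM; have := close k; have := normr_ge0 (x k - q k).
by case: (bit _ _); rewrite /= ?normr1 ?normr0 ?mul1r ?mul0r; lra.
Qed.

Lemma mean_pstar nu i : mean i (pstar nu) = nu i.
Proof.
rewrite meanE.
pose g k (b : bool) := (nu k + (1 - 2 * nu k) * b%:R) * (if k == i then (~~ b)%:R else 1).
transitivity (\sum_(j < M) \prod_(k < N) g k (bit k j)).
  apply: eq_bigr => j _; rewrite /g big_split /= mulrC; congr (_ * _).
  by rewrite (bigD1 i) //= eqxx big1 ?mulr1 // => k /negbTE ->.
rewrite sum_prod_bits (bigD1 i) //= big1 ?mulr1; first by rewrite /g eqxx /=; ring.
by move=> k /negbTE hk; rewrite /g hk !mulr1 mulr0 addr0; ring.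
Qed.

Lemma simplex_pstar nu : (forall i, 0 <= nu i <= 1) -> simplex (pstar nu).
Proof.
move=> nu01; split.
  move=> j; apply: prodr_ge0 => i _; have /andP[nu0 nu1] := nu01 i.
  by case: (bit i j); rewrite /= ?mulr1 ?mulr0 ?addr0 //; lra.
rewrite (sum_prod_bits (fun i b => nu i + (1 - 2 * nu i) * b%:R)).
by apply: big1 => i _; rewrite mulr1 mulr0 addr0; ring.
Qed.

End BanditSignals.

Section Cell.
Variables (R : realType) (N : nat) (i1 : 'I_N).
Local Notation M := (2 ^ N)%N.
Local Notation L := (@Lband R N).
Local Notation simp := (@simplex R M).
Implicit Types (q x : 'I_M -> R).

Lemma cellc_meanP q : cellc L i1 q <->
  simp q /\ exists2 i, i != i1 & mean i1 q < mean i q.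
Proof.
split=> [[sq ncell]|[sq [i hi lt]]]; split=> //.
  apply: contrapT => nex; apply: ncell; split=> // i hi.
  by rewrite Lband_gap subr_le0 leNgt; apply/negP => lt; apply: nex; exists i.
by case=> _ /(_ i hi); rewrite Lband_gap subr_le0 leNgt lt.
Qed.

Lemma relint_cellc q i : simp q -> i != i1 -> mean i1 q < mean i q ->
  relint simp (cellc L i1) q.
Proof.
move=> sq hi lt; split => //.
have M0 : 0 < M%:R :> R by rewrite ltr0n expn_gt0.
pose g := mean i q - mean i1 q.
have g0 : 0 < g by rewrite subr_gt0.
exists (g / (4 * M%:R)); split; first by apply: divr_gt0 => //; apply: mulr_gt0.
move=> x sx close; apply/cellc_meanP; split => //; exists i => //.
have eM : M%:R * (g / (4 * M%:R)) = g / 4 by field; apply/eqP; lra.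
have := mean_lipschitz i close; have := mean_lipschitz i1 close.
by rewrite eM !ler_norml /g; lra.
Qed.

Lemma relcl_cellcP q : relcl simp (cellc L i1) q ->
  exists2 i, i != i1 & mean i1 q <= mean i q.
Proof.
case=> sq near.
have M0 : 0 < M%:R :> R by rewrite ltr0n expn_gt0.
have [_ [/cellc_meanP [_ [i0 hi0 _]] _]] := near 1 ltr01.
case: (@arg_maxP _ _ _ _ (fun i => i != i1) (fun i => mean i q) hi0) => i hi imax.
exists i => //; apply/ler_addgt0Pr => e e0.
have e' : 0 < e / (2 * M%:R) by apply: divr_gt0 => //; apply: mulr_gt0.
have [x [/cellc_meanP [_ [k hk lt]] close]] := near _ e'.
have eM : M%:R * (e / (2 * M%:R)) = e / 2 by field; apply/eqP; lra.
have imk : mean k q <= mean i q := imax k hk.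
have := mean_lipschitz k close; have := mean_lipschitz i1 close.
by rewrite eM !ler_norml; lra.
Qed.

Lemma relcl_cellc_approx q i e : simp q -> i != i1 -> mean i1 q < 1 ->
  mean i1 q <= mean i q -> 0 < e ->
  exists x, [/\ simp x, mean i1 x = mean i1 q, mean i1 x < mean i x
              & forall k, `|x k - q k| < e].
Proof.
move=> sq hi lt1 le e0.
pose nu k := if k == i1 then mean i1 q else 1.
have sr : simp (pstar nu).
  apply: simplex_pstar => k; rewrite /nu.
  by case: (k == i1); [exact: mean_le1 | rewrite ler01 lexx].
pose t := Num.min (1 / 2) (e / 2).
have t0 : 0 < t by rewrite lt_min; apply/andP; split; lra.
have t1 : t <= 1 / 2 by rewrite ge_min lexx.
have te : t <= e / 2 by rewrite ge_min lexx orbT.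
exists (fun k => (1 - t) * q k + t * pstar nu k); split.
- by apply: simplex_mix => //; apply/andP; split; lra.
- by rewrite mean_mix mean_pstar /nu eqxx; ring.
- rewrite !mean_mix !mean_pstar /nu eqxx (negbTE hi).
  have : (1 - t) * mean i1 q <= (1 - t) * mean i q by apply: ler_wpM2l => //; lra.
  have : 0 < t * (1 - mean i1 q) by apply: mulr_gt0; lra.
  lra.
- move=> k; have /andP[q0 q1] := simplex_le1 k sq.
  have /andP[r0 r1] := simplex_le1 k sr.
  rewrite (_ : _ - q k = t * (pstar nu k - q k)); last by ring.
  have : `|pstar nu k - q k| <= 1 by rewrite ler_norml; apply/andP; split; lra.
  rewrite normrM gtr0_norm // => /(ler_wpM2l (ltW t0)); lra.
Qed.

Lemma relcl_cellc q i : simp q -> i != i1 -> mean i1 q < 1 ->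
  mean i1 q <= mean i q -> relcl simp (cellc L i1) q.
Proof.
move=> sq hi lt1 le; split => // e e0.
have [x [sx _ lt close]] := relcl_cellc_approx sq hi lt1 le e0.
by exists x; split => //; apply/cellc_meanP; split => //; exists i.
Qed.

Lemma relcl_relintI_cellc (S : set ('I_M -> R)) :
  (forall q, S q -> simp q /\ mean i1 q < 1) ->
  (forall q x, S q -> simp x -> mean i1 x = mean i1 q -> S x) ->
  relcl simp (relint simp (cellc L i1) `&` S) =
  relcl simp (relcl simp (cellc L i1) `&` S).
Proof.
move=> S_lt1 S_mean; apply/seteqP; split.
  by apply: relcl_subset => q [/relint_sub_relcl cq Sq].
move=> q hq; apply: relcl_idem; apply: relcl_subset hq => y [cy Sy].
have [sy y1] := S_lt1 y Sy; have [i hi le] := relcl_cellcP cy.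
split => // e e0; have [x [sx ex lt close]] := relcl_cellc_approx sy hi y1 le e0.
by exists x; split => //; split; [exact: relint_cellc sx hi lt | exact: S_mean Sy sx ex].
Qed.

End Cell.

Section BernoulliBandit.
Variables (R : realType) (N : nat) (mu : 'I_N -> R) (i1 : 'I_N).
Hypothesis hi1 : nat_of_ord i1 = 0%N.
Hypothesis hmu1 : mu i1 < 1.
Hypothesis hdec : forall i k : 'I_N, (i < k)%N -> mu k < mu i.
Hypothesis hmu0 : forall i : 'I_N, 0 < mu i.
Local Notation M := (2 ^ N)%N.
Local Notation L := (@Lband R N).
Local Notation h := (@Hband N).
Local Notation p := (pstar mu).
Local Notation ps := (fun i => Sig h i p).
Local Notation simp := (@simplex R M).
Local Notation d i := (dber (mu i) (mu i1)).
Local Notation gap i := (\sum_(k < M) (L i k - L i1 k) * p k).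
Implicit Types (q : 'I_M -> R) (r : 'I_N -> R).

Lemma mu_lt_mu1 k : k != i1 -> mu k < mu i1.
Proof.
move=> k1; apply: hdec; rewrite hi1 lt0n; apply: contra k1 => /eqP k0.
by apply/eqP/val_inj; rewrite /= k0 hi1.
Qed.

Lemma mu_in01 k : 0 < mu k < 1.
Proof.
rewrite hmu0 /=; have [->//|k1] := eqVneq k i1.
exact: lt_trans (mu_lt_mu1 k1) hmu1.
Qed.

Lemma KL_ps i q : simp q -> KL (ps i) (Sig h i q) = klber (mu i) (mean i q).
Proof.
move=> sq; rewrite KL_Hband ?mean_pstar //; apply: simplex_pstar => k.
by have /andP[mu0 mu1] := mu_in01 k; rewrite !ltW.
Qed.

Lemma d_gt0 i : i != i1 -> 0 < d i.
Proof. by move=> hi; rewrite dber_gt0 ?mu_in01 ?gt_eqF ?mu_lt_mu1. Qed.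

Lemma gap_gt0 i : i != i1 -> 0 < gap i.
Proof. by move=> hi; rewrite Lband_gap !mean_pstar subr_gt0 mu_lt_mu1. Qed.

Lemma relcl_relintI_eq (delta : R) :
  let S := [set q | simp q /\ (KL (Sig h i1 p) (Sig h i1 q) <= delta%:E)%E] in
  relcl simp (relint simp (cellc L i1) `&` S) =
  relcl simp (relcl simp (cellc L i1) `&` S).
Proof.
move=> S; apply: relcl_relintI_cellc => [q [sq]|q x [sq Kq] sx mx].
  rewrite KL_ps // => Kq; split => //; rewrite lt_neqAle.
  have /andP[_ -> ] := mean_le1 i1 sq; rewrite andbT.
  by apply: contraTneq Kq => ->; rewrite klber1 ?mu_in01.
by split => //; rewrite KL_ps // mx -KL_ps.
Qed.

Definition feasible q :=
  relcl simp (cellc L i1) q /\ (KL (ps i1) (Sig h i1 q) <= 0)%E.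

Definition objective r q : \bar R :=
  (\sum_(k < N | k != i1) (r k)%:E * maxe (KL (ps k) (Sig h k q)) 0)%E.

Lemma Rset0P r : Rset L h i1 ps (fun=> 0) r <->
  [/\ r i1 = 0, forall i, i != i1 -> 0 <= r i
    & forall q, feasible q -> (1 <= objective r q)%E].
Proof.
rewrite /Rset /= (_ : image _ _ = objective r @` feasible); last first.
  by congr image; apply/funext => q; apply: eq_bigr => k _; rewrite sube0.
split=> [[r0 [r_ge0 inf_ge1]]|[r0 r_ge0 obj_ge1]].
  by split=> // q fq; apply: le_trans inf_ge1 (ereal_inf_lbound _); exists q.
by do 2!split=> //; apply: le_ereal_inf_tmp => _ [q fq <-]; exact: obj_ge1.
Qed.

Lemma feasible_mean q : feasible q -> simp q /\ mean i1 q = mu i1.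
Proof.
case=> cq; have sq : simp q by case: cq.
by rewrite KL_ps // => K0; split => //; apply: klber_le0 K0; rewrite ?mu_in01 ?mean_le1.
Qed.

Lemma objective_ge r q : (forall i, i != i1 -> 0 <= r i) -> feasible q ->
  exists2 i, i != i1 & ((r i * d i)%:E <= objective r q)%E.
Proof.
move=> r_ge0 fq; have [sq mq] := feasible_mean fq.
have [i hi le] := relcl_cellcP fq.1.
exists i => //; rewrite /objective (bigD1 i) //= EFinM.
apply: le_trans (leeDl _ _); last first.
  apply: sume_ge0 => k /andP[hk _]; apply: mule_ge0; first by rewrite lee_fin r_ge0.
  by rewrite le_max lexx orbT.
apply: lee_wpmul2l; first by rewrite lee_fin r_ge0.
rewrite le_max KL_ps //; apply/orP; left.
have /andP[mu0 _] := mu_in01 i; have /andP[_ mean1] := mean_le1 i sq.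
by apply: dber_le_klber => //; [exact: ltW (mu_lt_mu1 hi) | rewrite -mq].
Qed.

Lemma objective_witness r i : i != i1 ->
  exists2 q, feasible q & objective r q = (r i * d i)%:E.
Proof.
move=> hi; pose nu k := mu (if k == i then i1 else k).
have sq : simp (pstar nu).
  apply: simplex_pstar => k; have /andP[mu0 mu1] := mu_in01 (if k == i then i1 else k).
  by rewrite !ltW.
have mean_nu k : mean k (pstar nu) = nu k by rewrite mean_pstar.
have nu_i1 : nu i1 = mu i1 by rewrite /nu eq_sym (negbTE hi).
exists (pstar nu).
  split; last by rewrite KL_ps // mean_nu nu_i1 klber_self ?mu_in01.
  by apply: (relcl_cellc sq hi); rewrite !mean_nu nu_i1 // /nu eqxx.
rewrite /objective (bigD1 i) //= big1 ?adde0 => [|k /andP[hk ki]].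
  by rewrite KL_ps // mean_nu /nu eqxx klber_fin ?mu_in01 // max_l ?lee_fin ?ltW ?d_gt0.
by rewrite KL_ps // mean_nu /nu (negbTE ki) klber_self ?mu_in01 // maxxx mule0.
Qed.

Lemma Rset0E r : Rset L h i1 ps (fun=> 0) r <->
  r i1 = 0 /\ forall i, i != i1 -> 1 <= r i * d i.
Proof.
rewrite Rset0P; split=> [[r0 r_ge0 obj_ge1]|[r0 rd_ge1]].
  split=> // i hi; have [q fq obj] := objective_witness r hi.
  by have := obj_ge1 q fq; rewrite obj lee_fin.
have r_ge0 i : i != i1 -> 0 <= r i.
  by move=> hi; have := rd_ge1 i hi; have := d_gt0 hi; nra.
split; [done | exact: r_ge0 | move=> q fq].
have [i hi obj] := objective_ge r_ge0 fq.
by apply: le_trans obj; rewrite lee_fin rd_ge1.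
Qed.

Definition rstar i : R := if i == i1 then 0 else (d i)^-1.

Lemma Rset_rstar : Rset L h i1 ps (fun=> 0) rstar.
Proof.
apply/Rset0E; split=> [|i hi]; first by rewrite /rstar eqxx.
by rewrite /rstar (negbTE hi) mulVf // gt_eqF ?d_gt0.
Qed.

Lemma gap_div_le r : Rset L h i1 ps (fun=> 0) r -> forall i, i != i1 ->
  gap i / d i <= r i * gap i.
Proof.
move=> /Rset0E [_ rd_ge1] i hi; rewrite mulrC ler_pM2r ?gap_gt0 //.
by rewrite -[_^-1]mul1r ler_pdivrMr ?d_gt0 // rd_ge1.
Qed.

Lemma Cj_eq : Cj L h i1 p ps (fun=> 0) = (\sum_(i < N | i != i1) gap i / d i)%:E.
Proof.
apply/le_anti/andP; split.
  apply: ereal_inf_lbound; exists rstar; first exact: Rset_rstar.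
  by congr _%:E; apply: eq_bigr => i hi; rewrite /rstar (negbTE hi) mulrC.
apply: le_ereal_inf_tmp => _ [r hr <-]; rewrite lee_fin.
by apply: ler_sum => i hi; apply: gap_div_le.
Qed.

Lemma Rstar_eq : Rstar L h i1 p ps (fun=> 0) = [set rstar].
Proof.
apply/seteqP; split => r; last first.
  move=> ->; split; first exact: Rset_rstar.
  by rewrite Cj_eq; congr _%:E; apply: eq_bigr => i hi; rewrite /rstar (negbTE hi) mulrC.
case=> hr; rewrite Cj_eq => -[opt].
have slack_ge0 i : i != i1 -> 0 <= r i * gap i - gap i / d i.
  by move=> hi; rewrite subr_ge0 gap_div_le.
have slack0 : \sum_(i < N | i != i1) (r i * gap i - gap i / d i) = 0.
  by rewrite sumrB opt subrr.
apply/funext => k; rewrite /rstar; case: eqP => [->|/eqP hk]; first by case/Rset0E: hr.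
move/eqP: (psumr_eq0P slack_ge0 slack0 hk); rewrite subr_eq0 => /eqP e.
by apply: (mulIf (lt0r_neq0 (gap_gt0 hk))); rewrite e mulrC.
Qed.

End BernoulliBandit.

Theorem corollary4 (R : realType) (N : nat) (mu : 'I_N -> R)
  (i1 : 'I_N) (hi1 : nat_of_ord i1 = 0%N) (hN : (2 <= N)%N)
  (hmu1 : mu i1 < 1)
  (hdec : forall i k : 'I_N, (i < k)%N -> mu k < mu i)
  (hmu0 : forall i : 'I_N, 0 < mu i) :
  let L := @Lband R N in
  let h := @Hband N in
  let p := pstar mu in
  let ps := fun i => Sig h i p in
  (exists r, Rstar L h i1 p ps (fun _ => 0) = [set r]) /\
  (exists d0 : R, 0 < d0 /\ forall delta : R, 0 <= delta -> delta < d0 ->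
     let S := [set q | simplex q /\ (KL (Sig h i1 p) (Sig h i1 q) <= delta%:E)%E] in
     relcl (@simplex R _) (relint (@simplex R _) (cellc L i1) `&` S)
     = relcl (@simplex R _) (relcl (@simplex R _) (cellc L i1) `&` S)) /\
  Cj L h i1 p ps (fun _ => 0)
    = (\sum_(i < N | i != i1)
         (\sum_(k < 2 ^ N) (L i k - L i1 k) * p k) / dber (mu i) (mu i1))%:E.
Proof.
move=> L h p ps; split; first by exists (rstar mu i1); exact: Rstar_eq.
split; last exact: Cj_eq.
by exists 1; split => // delta _ _; exact: relcl_relintI_eq.
Qed.
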